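(* Let $\varphi(z,x,y)$ and $\psi(z,x,y)$ both satisfy Conditions (C1)–(C5) described in the context. Then each of the following functions also satisfies Conditions (C1)–(C5): (i) $\theta(z,x,y)=\varphi(z,x,y)+\psi(z,x,y)$; (ii) $\theta(z,x,y)=\varphi(z,x,y)b(x,y)$, where $b\in L_\infty(\Omega\times\Omega)$ and $0<c_5<b(x,y)<c_6$ for constants $c_5,c_6$; (iii) $\theta(z,x,y)=\varphi(z,x,y)\psi(z,x,y)$; (iv) $\theta(z,x,y)=\varphi(\psi(z,x,y),x,y)$.
   Context: Let $\Omega\subseteq\mathbb R^d$ be a domain; functions in $L_{1,loc}(\Omega)$ are complex-valued. A real function $r$ on $[0,\infty)$ is almost increasing (resp. almost decreasing) with constant $\beta\ge1$ if $r(s)\le\beta r(t)$ (resp. $\beta r(s)\ge r(t)$) for all $0\le s\le t$. For a function $\theta:[0,\infty)\times\Omega\times\Omega\to[0,\infty)$, the conditions are: (C1) for each $u\in L_{1,loc}(\Omega)$ the function $(x,y)\mapsto\theta(|u(x)-u(y)|,x,y)$ is measurable on $\Omega\times\Omega$; (C2) for every $\varepsilon>0$ there is $\delta\in(0,1)$ such that $\theta(\frac{s+t}{2},x,y)\le(1-\delta)\frac{\theta(s,x,y)+\theta(t,x,y)}{2}$ for a.e. $(x,y)$ and all $s,t>0$ with $|s-t|\ge\varepsilon\max\{s,t\}$; (C3) there are constants $1<p_-\le p_+$ and $\beta\ge1$ such that for a.e. $(x,y)$ the function $t\mapsto\theta(t,x,y)/t^{p_-}$ is almost increasing with constant $\beta$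 and $t\mapsto\theta(t,x,y)/t^{p_+}$ is almost decreasing with constant $\beta$; (C4) for a.e. $(x,y)$: $c_1^{-1}\le\theta(1,x,y)\le c_1$ with some constant $c_1>0$, $\theta(0,x,y)=0$, and $\theta(t,x,y)>0$ for $t>0$; (C5) for a.e. $(x,y)$, $\theta(t,x,y)$ is differentiable in $t>0$ and $0<t\theta'(t,x,y)\le c_2\theta(t,x,y)$ for $t>0$, with some constant $c_2>1$ independent of $t,x,y$. The constants in the conditions may differ between functions. *)

From HB Require Import structures.
From mathcomp Require Import all_boot all_order all_algebra.
From mathcomp Require Import all_classical all_reals all_analysis.
From mathcomp Require Import complex.
Set Implicit Arguments. Unset Strict Implicit. Unset Printing Implicit Defensive.
Import Order.TTheory GRing.Theory Num.Theory.
Import numFieldNormedType.Exports.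
Local Open Scope classical_set_scope.
Local Open Scope ring_scope.

(* R^d is modelled as 'rV[R]_d (normed topology from matrix_normedtype).  *)
(* We equip it with the Borel sigma-algebra, i.e. the sigma-algebra       *)
(* generated by the coordinate maps (product of the Borel sets of R).     *)
Definition rV_display : measure_display -> measure_display.
Proof. exact. Qed.

Section rV_measurable.
Context (R : realType) (n : nat).

Definition rV_coord (i : 'I_n) : 'rV[R]_n -> R := fun x => x ord0 i.

Let rV_set0 : g_sigma_preimage rV_coord set0.
Proof. exact: sigma_algebra0. Qed.

Let rV_setC A : g_sigma_preimage rV_coord A -> g_sigma_preimage rV_coord (~` A).
Proof. exact: sigma_algebraC. Qed.

Let rV_bigcup (F : _^nat) : (forall i, g_sigma_preimage rV_coord (F i)) ->
  g_sigma_preimage rV_coord (\bigcup_i (F i)).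
Proof. exact: sigma_algebra_bigcup. Qed.

HB.instance Definition _ := @isMeasurable.Build (rV_display default_measure_display)
  'rV[R]_n (g_sigma_preimage rV_coord) rV_set0 rV_setC rV_bigcup.
End rV_measurable.

Section defs.
Context (R : realType) (d : nat).
Local Notation Rd := 'rV[R]_d.

Definition box (a b : Rd) : set Rd :=
  [set x | forall i : 'I_d, a ord0 i < x ord0 i <= b ord0 i].
Definition vol (a b : Rd) : R := \prod_(i < d) (b ord0 i - a ord0 i).
Definition box_le (a b : Rd) := forall i : 'I_d, a ord0 i <= b ord0 i.

Definition is_lebesgue (lam : {measure set Rd -> \bar R}) : Prop :=
  forall a b, box_le a b -> lam (box a b) = (vol a b)%:E.

Definition is_lebesgue2 (Lam : {measure set (Rd * Rd) -> \bar R}) : Prop :=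
  forall a b a' b', box_le a b -> box_le a' b' ->
    Lam (box a b `*` box a' b') = (vol a b * vol a' b')%:E.

Definition is_domain (Omega : set Rd) : Prop :=
  [/\ open Omega, connected Omega & Omega !=set0].

(* Lebesgue measurability (w.r.t. the completion of mu) of a real function
   on D: f coincides mu-a.e. on D with a Borel measurable function. *)
Definition ae_measurable {dT} {T : measurableType dT}
    (mu : {measure set T -> \bar R}) (D : set T) (f : T -> R) : Prop :=
  exists g : T -> R, measurable_fun D g /\ {ae mu, forall x, D x -> f x = g x}.

Definition L1loc (lam : {measure set Rd -> \bar R}) (Omega : set Rd)
    (u : Rd -> R[i]) : Prop :=
  exists g : Rd -> R[i],
    [/\ measurable_fun Omega (fun x => complex.Re (g x)),
        measurable_fun Omega (fun x => complex.Im (g x)),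
        {ae lam, forall x, Omega x -> u x = g x} &
        forall K : set Rd, compact K -> K `<=` Omega ->
          (\int[lam]_(x in K) (ComplexField.Normc.normc (g x))%:E < +oo)%E].

Definition almost_increasing_pos (beta : R) (r : R -> R) : Prop :=
  forall s t, 0 < s -> s <= t -> r s <= beta * r t.
Definition almost_decreasing_pos (beta : R) (r : R -> R) : Prop :=
  forall s t, 0 < s -> s <= t -> beta * r s >= r t.

Variables (lam : {measure set Rd -> \bar R})
          (Lam : {measure set (Rd * Rd) -> \bar R}) (Omega : set Rd).

Definition OO : set (Rd * Rd) := Omega `*` Omega.

Definition C0 (theta : R -> Rd -> Rd -> R) : Prop :=
  forall t x y, 0 <= t -> Omega x -> Omega y -> 0 <= theta t x y.

Definition C1 (theta : R -> Rd -> Rd -> R) : Prop :=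
  forall u : Rd -> R[i], L1loc lam Omega u ->
    ae_measurable Lam OO (fun p => theta (ComplexField.Normc.normc (u p.1 - u p.2)) p.1 p.2).

Definition C2 (theta : R -> Rd -> Rd -> R) : Prop :=
  forall eps : R, 0 < eps -> exists delta : R, 0 < delta < 1 /\
    {ae Lam, forall p, OO p -> forall s t : R, 0 < s -> 0 < t ->
       `|s - t| >= eps * Num.max s t ->
       theta ((s + t) / 2) p.1 p.2 <=
         (1 - delta) * ((theta s p.1 p.2 + theta t p.1 p.2) / 2)}.

Definition C3 (theta : R -> Rd -> Rd -> R) : Prop :=
  exists pm pp beta : R, [/\ 1 < pm, pm <= pp, 1 <= beta &
    {ae Lam, forall p, OO p ->
       almost_increasing_pos beta (fun t => theta t p.1 p.2 / t `^ pm) /\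
       almost_decreasing_pos beta (fun t => theta t p.1 p.2 / t `^ pp)}].

Definition C4 (theta : R -> Rd -> Rd -> R) : Prop :=
  exists c1 : R, 0 < c1 /\
    {ae Lam, forall p, OO p ->
       [/\ c1^-1 <= theta 1 p.1 p.2 <= c1, theta 0 p.1 p.2 = 0 &
           forall t, 0 < t -> 0 < theta t p.1 p.2]}.

Definition C5 (theta : R -> Rd -> Rd -> R) : Prop :=
  exists c2 : R, 1 < c2 /\
    {ae Lam, forall p, OO p -> forall t : R, 0 < t ->
       derivable (fun s => theta s p.1 p.2) t 1 /\
       0 < t * derive1 (fun s => theta s p.1 p.2) t <= c2 * theta t p.1 p.2}.

Definition conditions_C1_C5 (theta : R -> Rd -> Rd -> R) : Prop :=
  [/\ C0 theta, C1 theta, C2 theta, C3 theta & C4 theta /\ C5 theta].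

End defs.

From HB Require Import structures.
From mathcomp Require Import all_boot all_order all_algebra.
From mathcomp Require Import all_classical all_reals all_analysis.
From mathcomp Require Import complex.
From mathcomp Require Import ring lra measurable_realfun.
Set Implicit Arguments. Unset Strict Implicit. Unset Printing Implicit Defensive.
Import Order.TTheory GRing.Theory Num.Theory.
Import numFieldNormedType.Exports.
Local Open Scope classical_set_scope.
Local Open Scope ring_scope.

(* Every condition is, for almost every (x, y), a property of the slice
   t |-> theta(t, x, y) with constants independent of (x, y).  For (C2)-(C5)
   these are elementary properties of positive functions on (0, oo) that
   survive sums, positive multiples, products and compositions: a midpoint
   convexity gap (Chebyshev's inequality handles products), almost
   monotonicity of theta(t) / t^p, and 0 < t theta'(t) <= c theta(t).
   Measurability (C1) passes to sums and products directly.  For the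
   composition, phi(q, x, y) [x <> y] is a.e. measurable for each fixed q,
   as the limit of maxima of phi(|u x - u y|, x, y) over indicators u of
   countably many point-separating boxes; phi(psi, x, y) is then the a.e.
   limit of phi(floor(n psi) / n, x, y), by continuity of phi in t. *)

Section profiles.
Context {R : realType}.
Implicit Types (f g : R -> R) (b c p s t : R).

Definition growth_fun f := [/\ f 0 = 0, forall t, 0 < t -> 0 < f t &
  forall t, 0 < t -> derivable f t 1 /\ 0 < t * derive1 f t].

Lemma growth_fun_ge0 f t : growth_fun f -> 0 <= t -> 0 <= f t.
Proof. by case=> f0 fp _; rewrite le_eqVlt => /predU1P[<-|/fp/ltW//]; rewrite f0. Qed.

Lemma growth_fun_continuous f t : growth_fun f -> 0 < t -> {for t, continuous f}.
Proof.
case=> _ _ fd t0; have [/derivable1_diffP + _] := fd t t0.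
exact: differentiable_continuous.
Qed.

Lemma growth_fun_le f s t : growth_fun f -> 0 <= s -> s <= t -> f s <= f t.
Proof.
move=> gf; rewrite le_eqVlt => /predU1P[<- t0|s0 st].
  by case: (gf) => -> _ _; exact: growth_fun_ge0 gf t0.
have [_ _ fd] := gf.
have fd' x : s < x -> derivable f x 1 /\ 0 < x * derive1 f x.
  by move=> sx; apply: fd; apply: lt_trans sx.
apply: (@ger0_derive1_le_cc _ f s t); rewrite ?in_itv /= ?lexx ?st //.
- by move=> x; rewrite in_itv /= => /andP[/fd'[]].
- move=> x; rewrite in_itv /= => /andP[sx _]; have [_] := fd' x sx.
  by rewrite pmulr_rgt0 ?(lt_trans s0 sx) // => /ltW.
- apply: continuous_in_subspaceT => x; rewrite inE /= in_itv /= => /andP[sx _].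
  exact: growth_fun_continuous gf (lt_le_trans s0 sx).
Qed.

Definition midpoint_gap f (eps delta : R) := forall s t, 0 < s -> 0 < t ->
  eps * Num.max s t <= `|s - t| ->
  f ((s + t) / 2) <= (1 - delta) * ((f s + f t) / 2).

Lemma midpoint_gapD f g eps d1 d2 :
  (forall t, 0 < t -> 0 <= f t) -> (forall t, 0 < t -> 0 <= g t) ->
  midpoint_gap f eps d1 -> midpoint_gap g eps d2 ->
  midpoint_gap (fun t => f t + g t) eps (Num.min d1 d2).
Proof.
move=> f0 g0 mf mg s t s0 t0 h.
have := mf s t s0 t0 h; have := mg s t s0 t0 h.
have := f0 s s0; have := f0 t t0; have := g0 s s0; have := g0 t t0.
have : Num.min d1 d2 <= d1 by rewrite ge_min lexx.
have : Num.min d1 d2 <= d2 by rewrite ge_min lexx orbT.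
move=> *; nra.
Qed.

Lemma midpoint_gapMr f c eps delta : 0 < c -> midpoint_gap f eps delta ->
  midpoint_gap (fun t => f t * c) eps delta.
Proof.
move=> c0 mf s t s0 t0 h.
have -> : (1 - delta) * ((f s * c + f t * c) / 2) =
  ((1 - delta) * ((f s + f t) / 2)) * c by ring.
by rewrite ler_pM2r //; apply: mf.
Qed.

Lemma midpoint_gapM f g eps d1 d2 : growth_fun f -> growth_fun g ->
  d1 < 1 -> 0 < d2 < 1 -> midpoint_gap f eps d1 -> midpoint_gap g eps d2 ->
  midpoint_gap (fun t => f t * g t) eps d1.
Proof.
move=> gf gg d11 /andP[d20 d21] mf mg s t s0 t0 h.
have m0 : 0 <= (s + t) / 2 by rewrite divr_ge0 // addr_ge0 // ltW.
have fm0 := growth_fun_ge0 gf m0; have gm0 := growth_fun_ge0 gg m0.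
have fs0 := growth_fun_ge0 gf (ltW s0); have ft0 := growth_fun_ge0 gf (ltW t0).
have gs0 := growth_fun_ge0 gg (ltW s0); have gt0 := growth_fun_ge0 gg (ltW t0).
(* Chebyshev: f and g are both nondecreasing *)
have cheb : 0 <= (f s - f t) * (g s - g t).
  have [st|/ltW ts] := leP s t.
    have := growth_fun_le gf (ltW s0) st; have := growth_fun_le gg (ltW s0) st.
    by move=> *; nra.
  have := growth_fun_le gf (ltW t0) ts; have := growth_fun_le gg (ltW t0) ts.
  by move=> *; nra.
have := mf s t s0 t0 h; have := mg s t s0 t0 h.
set Af := (f s + f t) / 2; set Ag := (g s + g t) / 2 => hg hf.
have Af0 : 0 <= Af by rewrite /Af; lra.
have Ag0 : 0 <= Ag by rewrite /Ag; lra.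
have AfAg : Af * Ag <= (f s * g s + f t * g t) / 2 by rewrite /Af /Ag; nra.
apply: (le_trans (ler_pM fm0 gm0 hf hg)).
apply: (@le_trans _ _ (((1 - d1) * Af) * Ag)).
  by apply: ler_wpM2l; [rewrite mulr_ge0 //; lra | nra].
by rewrite -mulrA; apply: ler_wpM2l => //; lra.
Qed.

(* If g(s) and g(t) are far apart, use the gap of f at eps = dg/4; otherwise
   g((s+t)/2) is already below g(min) by a factor 1 - dg/4 and the gap of f at
   dg/2 applies to the pair ((1 - dg/2) g(min), g(min)). *)
Lemma midpoint_gap_comp f g eps dg da db : growth_fun f -> growth_fun g ->
  0 < dg < 1 -> da < 1 -> midpoint_gap g eps dg ->
  midpoint_gap f (dg / 2) da -> midpoint_gap f (dg / 4) db ->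
  midpoint_gap (fun t => f (g t)) eps (Num.min da db).
Proof.
move=> gf gg /andP[dg0 dg1] da1 mg mfa mfb.
have mina : Num.min da db <= da by rewrite ge_min lexx.
have minb : Num.min da db <= db by rewrite ge_min lexx orbT.
move=> s t s0 t0 h.
wlog ab : s t s0 t0 h / g s <= g t.
  move=> W; have [//|/ltW ba] := leP (g s) (g t); first exact: W.
  rewrite (addrC s) (addrC (f (g s))); apply: W => //.
  by rewrite maxC distrC.
have [_ gp _] := gg; have [_ fp _] := gf.
have a0 := gp s s0; have b0 := gp t t0.
have fa0 := fp _ a0; have fb0 := fp _ b0.
have gm0 : 0 <= g ((s + t) / 2).
  by apply: (growth_fun_ge0 gg); rewrite divr_ge0 // addr_ge0 // ltW.
have hg := mg s t s0 t0 h.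
set a := g s in ab a0 hg *; set b := g t in ab b0 hg *.
set gm := g ((s + t) / 2) in gm0 hg *.
have fab : f a <= f b by exact: growth_fun_le gf (ltW a0) ab.
have [far|near] := leP (dg / 4 * b) (b - a).
  have hM : gm <= (a + b) / 2 by nra.
  apply: (le_trans (growth_fun_le gf gm0 hM)).
  have := mfb a b a0 b0; rewrite (max_r ab) distrC ger0_norm ?subr_ge0 //.
  by move/(_ far) => H; apply: (le_trans H); apply: ler_wpM2r; lra.
have hM : gm <= (1 - dg / 4) * a by nra.
apply: (le_trans (growth_fun_le gf gm0 hM)).
have a'0 : 0 < (1 - dg / 2) * a by rewrite mulr_gt0 //; lra.
have := mfa _ _ a'0 a0; rewrite max_r; last by nra.
have -> : ((1 - dg / 2) * a + a) / 2 = (1 - dg / 4) * a by field.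
have -> : `|(1 - dg / 2) * a - a| = dg / 2 * a.
  by rewrite ler0_norm; [field | nra].
move/(_ (lexx _)) => H; apply: (le_trans H).
have fa'a : f ((1 - dg / 2) * a) <= f a.
  by apply: (growth_fun_le gf (ltW a'0)); nra.
apply: (@le_trans _ _ ((1 - da) * ((f a + f b) / 2))).
  by apply: ler_wpM2l; lra.
by apply: ler_wpM2r; lra.
Qed.

Lemma ler_powR_base (q x y : R) : 0 <= q -> 0 <= x -> x <= y -> x `^ q <= y `^ q.
Proof. by move=> q0 x0 xy; apply: ge0_ler_powR; rewrite // nnegrE (le_trans x0). Qed.

(* [pow_ratio_le b p f s t] is [f s / s^p <= b * (f t / t^p)] with the
   denominators cleared. *)
Definition pow_ratio_le b p f s t := f s * t `^ p <= b * f t * s `^ p.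

Lemma pow_ratio_leE b p f s t : 0 < s -> 0 < t ->
  (f s / s `^ p <= b * (f t / t `^ p)) = pow_ratio_le b p f s t.
Proof.
move=> s0 t0; have st0 : 0 < s `^ p * t `^ p by rewrite mulr_gt0 ?powR_gt0.
rewrite -(ler_pM2r st0) /pow_ratio_le.
by congr (_ <= _); field; rewrite !gt_eqF ?powR_gt0.
Qed.

Definition almost_pow_bounds b pm pp f :=
  (forall s t, 0 < s -> s <= t -> pow_ratio_le b pm f s t) /\
  (forall s t, 0 < s -> s <= t -> pow_ratio_le b pp f t s).

Lemma almost_pow_boundsE b pm pp f :
  almost_increasing_pos b (fun t => f t / t `^ pm) /\
  almost_decreasing_pos b (fun t => f t / t `^ pp) <-> almost_pow_bounds b pm pp f.
Proof.
split=> -[hi hd]; split=> s t s0 st; have t0 := lt_le_trans s0 st.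
- by rewrite -pow_ratio_leE //; exact: hi.
- by rewrite -pow_ratio_leE //; exact: hd.
- by rewrite pow_ratio_leE //; exact: hi.
- by rewrite /= pow_ratio_leE //; exact: hd.
Qed.

Lemma pow_ratio_leD b1 b2 p f g s t : 0 <= b1 -> 0 <= b2 ->
  0 <= f t -> 0 <= g t -> pow_ratio_le b1 p f s t -> pow_ratio_le b2 p g s t ->
  pow_ratio_le (b1 + b2) p (fun t => f t + g t) s t.
Proof.
rewrite /pow_ratio_le => b10 b20 f0 g0.
have := powR_ge0 s p; have := mulr_ge0 b10 g0; have := mulr_ge0 b20 f0.
by move=> *; nra.
Qed.

Lemma pow_ratio_leMr b p f c s t : 0 < c -> pow_ratio_le b p f s t ->
  pow_ratio_le b p (fun t => f t * c) s t.
Proof.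
rewrite /pow_ratio_le => c0 h.
have -> : f s * c * t `^ p = f s * t `^ p * c by ring.
have -> : b * (f t * c) * s `^ p = b * f t * s `^ p * c by ring.
by rewrite ler_pM2r.
Qed.

Lemma pow_ratio_leM b1 b2 p1 p2 f g s t : 0 < s -> 0 < t -> 0 <= f s -> 0 <= g s ->
  pow_ratio_le b1 p1 f s t -> pow_ratio_le b2 p2 g s t ->
  pow_ratio_le (b1 * b2) (p1 + p2) (fun t => f t * g t) s t.
Proof.
rewrite /pow_ratio_le => s0 t0 f0 g0 hf hg.
rewrite !powRD ?lt0r_neq0 ?implybT //.
have -> : f s * g s * (t `^ p1 * t `^ p2) = f s * t `^ p1 * (g s * t `^ p2) by ring.
have -> : b1 * b2 * (f t * g t) * (s `^ p1 * s `^ p2) =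
  b1 * f t * s `^ p1 * (b2 * g t * s `^ p2) by ring.
by apply: ler_pM => //; exact: mulr_ge0 (powR_ge0 _ _).
Qed.

Lemma pow_ratio_le_comp b1 b2 p1 p2 f g s t : 0 < s -> 0 < t ->
  0 < g s -> 0 < g t -> 0 <= f (g s) -> 0 <= b2 -> 0 <= p1 ->
  pow_ratio_le b1 p1 f (g s) (g t) -> pow_ratio_le b2 p2 g s t ->
  pow_ratio_le (b1 * b2 `^ p1) (p2 * p1) (fun t => f (g t)) s t.
Proof.
rewrite /pow_ratio_le /= => s0 t0 gs0 gt0 f0 b20 p10 hf hg.
have {}hg : (g s * t `^ p2) `^ p1 <= (b2 * g t * s `^ p2) `^ p1.
  by apply: ge0_ler_powR; rewrite // nnegrE !mulr_ge0 ?powR_ge0 // ltW.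
rewrite powRM ?mulr_ge0 ?powR_ge0 ?(ltW gs0) // in hg.
rewrite powRM ?mulr_ge0 ?powR_ge0 ?(ltW gt0) // in hg.
rewrite powRM ?(ltW gt0) // -!powRrM in hg.
have key := ler_pM (mulr_ge0 f0 (powR_ge0 _ _))
  (mulr_ge0 (powR_ge0 _ _) (powR_ge0 _ _)) hf hg.
have AB0 : 0 < g s `^ p1 * g t `^ p1 by rewrite mulr_gt0 ?powR_gt0.
rewrite -(ler_pM2r AB0); congr (_ <= _) : key; ring.
Qed.

Lemma almost_pow_bounds_widen b pm pp pm' pp' f : pm' <= pm -> pp <= pp' ->
  0 <= b -> (forall t, 0 < t -> 0 <= f t) ->
  almost_pow_bounds b pm pp f -> almost_pow_bounds b pm' pp' f.
Proof.
move=> lem lep b0 f0 [hi hd].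
split=> s t s0 st; have t0 := lt_le_trans s0 st.
- have [q pmE q0] : exists2 q, pm = pm' + q & 0 <= q.
    by exists (pm - pm'); [ring | rewrite subr_ge0].
  have := hi s t s0 st; rewrite pmE /pow_ratio_le !powRD ?lt0r_neq0 ?implybT // => H.
  rewrite -(ler_pM2r (powR_gt0 q t0)) -(mulrA (f s)) (le_trans H) //.
  rewrite -!mulrA; apply: ler_wpM2l => //; apply: ler_wpM2l; first exact: f0.
  by apply: ler_wpM2l; [exact: powR_ge0 | rewrite ler_powR_base // ltW].
- have [q -> q0] : exists2 q, pp' = pp + q & 0 <= q.
    by exists (pp' - pp); [ring | rewrite subr_ge0].
  have := hd s t s0 st; rewrite /pow_ratio_le !powRD ?lt0r_neq0 ?implybT // => H.
  rewrite mulrA [X in _ <= X]mulrA (le_trans _ (ler_wpM2r (powR_ge0 _ _) H)) //.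
  by apply: ler_wpM2l; [rewrite mulr_ge0 ?powR_ge0 ?f0 | rewrite ler_powR_base // ltW].
Qed.

Lemma almost_pow_boundsD b1 b2 pm pp f g : 0 <= b1 -> 0 <= b2 ->
  (forall t, 0 < t -> 0 <= f t) -> (forall t, 0 < t -> 0 <= g t) ->
  almost_pow_bounds b1 pm pp f -> almost_pow_bounds b2 pm pp g ->
  almost_pow_bounds (b1 + b2) pm pp (fun t => f t + g t).
Proof.
move=> b10 b20 f0 g0 [fi fd] [gi gd].
split=> s t s0 st; have t0 := lt_le_trans s0 st; apply: pow_ratio_leD;
  by [rewrite ?f0 ?g0 | exact: fi | exact: gi | exact: fd | exact: gd].
Qed.

Lemma almost_pow_boundsMr b pm pp f c : 0 < c ->
  almost_pow_bounds b pm pp f -> almost_pow_bounds b pm pp (fun t => f t * c).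
Proof.
by move=> c0 [fi fd]; split=> s t s0 st; apply: pow_ratio_leMr; [|exact: fi|
  |exact: fd].
Qed.

Lemma almost_pow_boundsM b1 b2 pm1 pp1 pm2 pp2 f g :
  (forall t, 0 < t -> 0 <= f t) -> (forall t, 0 < t -> 0 <= g t) ->
  almost_pow_bounds b1 pm1 pp1 f -> almost_pow_bounds b2 pm2 pp2 g ->
  almost_pow_bounds (b1 * b2) (pm1 + pm2) (pp1 + pp2) (fun t => f t * g t).
Proof.
move=> f0 g0 [fi fd] [gi gd].
split=> s t s0 st; have t0 := lt_le_trans s0 st; apply: pow_ratio_leM;
  by [rewrite ?f0 ?g0 | exact: fi | exact: gi | exact: fd | exact: gd].
Qed.

Lemma almost_pow_bounds_comp b1 b2 pm1 pp1 pm2 pp2 f g : growth_fun g ->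
  0 <= pm1 <= pp1 -> 0 <= b1 -> 1 <= b2 -> (forall t, 0 < t -> 0 <= f t) ->
  almost_pow_bounds b1 pm1 pp1 f -> almost_pow_bounds b2 pm2 pp2 g ->
  almost_pow_bounds (b1 * b2 `^ pp1) (pm2 * pm1) (pp2 * pp1) (fun t => f (g t)).
Proof.
move=> gg /andP[pm0 pmp] b10 b21 f0 [fi fd] [gi gd].
have [_ gp _] := gg; have b20 : 0 <= b2 by lra.
split=> s t s0 st; have t0 := lt_le_trans s0 st.
- have le_b : b1 * b2 `^ pm1 <= b1 * b2 `^ pp1.
    by apply: ler_wpM2l => //; apply: ler_powR.
  have := pow_ratio_le_comp s0 t0 (gp _ s0) (gp _ t0) (f0 _ (gp _ s0)) b20 pm0
    (fi _ _ (gp _ s0) (growth_fun_le gg (ltW s0) st)) (gi _ _ s0 st).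
  move/le_trans; apply; apply: ler_wpM2r; first exact: powR_ge0.
  by apply: ler_wpM2r => //; rewrite f0 ?gp.
- apply: pow_ratio_le_comp; rewrite ?gp ?f0 ?gp ?(le_trans pm0 pmp) //.
  + exact: fd _ _ (gp _ s0) (growth_fun_le gg (ltW s0) st).
  + exact: gd.
Qed.

(* With [1/c <= a <= c], the factor [c^pp] dominates both [a^pm] and [a^-pp]. *)
Lemma almost_pow_bounds_sandwich b pm pp f c a : 0 <= pm <= pp -> 0 <= b ->
  0 <= f 1 -> 0 <= f a -> 0 < c -> c^-1 <= a <= c ->
  almost_pow_bounds b pm pp f ->
  f a <= b * c `^ pp * f 1 /\ f 1 <= b * c `^ pp * f a.
Proof.
move=> /andP[pm0 pmp] b0 f10 fa0 c0 /andP[ca ac] [fi fd].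
have a0 : 0 < a by apply: lt_le_trans ca; rewrite invr_gt0.
have pp0 : 0 <= pp by apply: le_trans pmp.
have c1 : 1 <= c.
  have [//|c1] := leP 1 c; have : 1 < c^-1 by rewrite invf_gt1.
  by have := le_trans ca ac; lra.
have cpp : 1 <= c `^ pp by rewrite -(powRr0 c) ler_powR.
have bf1 : 0 <= b * f 1 by rewrite mulr_ge0.
have bfa : 0 <= b * f a by rewrite mulr_ge0.
have [a1|/ltW a1] := leP a 1.
- have := fi a 1 a0 a1; have := fd a 1 a0 a1; rewrite /pow_ratio_le powR1 /= !mulr1.
  have : a `^ pm <= 1 by rewrite -(powRr0 a) ger_powR ?a0.
  have : 1 <= a `^ pp * c `^ pp.
    rewrite -(powRM pp (ltW a0) (ltW c0)) -(powRr0 (a * c)) ler_powR //.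
    by rewrite -(mulVf (lt0r_neq0 c0)) ler_wpM2r // ltW.
  by move=> *; split; nra.
have := fi 1 a ltr01 a1; have := fd 1 a ltr01 a1; rewrite /pow_ratio_le powR1 /= !mulr1.
have : 1 <= a `^ pm by rewrite -(powRr0 a) ler_powR.
have : a `^ pp <= c `^ pp by rewrite ler_powR_base // ltW.
by move=> *; split; nra.
Qed.

Definition dlog_bounded c f := forall t, 0 < t ->
  derivable f t 1 /\ 0 < t * derive1 f t <= c * f t.

Lemma dlog_bounded_growth_fun c f : f 0 = 0 -> (forall t, 0 < t -> 0 < f t) ->
  dlog_bounded c f -> growth_fun f.
Proof. by move=> f0 fp fd; split=> // t /fd[? /andP[]]. Qed.

Lemma dlog_boundedD c1 c2 f g : 0 <= c1 -> 0 <= c2 ->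
  (forall t, 0 < t -> 0 <= f t) -> (forall t, 0 < t -> 0 <= g t) ->
  dlog_bounded c1 f -> dlog_bounded c2 g ->
  dlog_bounded (c1 + c2) (fun t => f t + g t).
Proof.
move=> c10 c20 f0 g0 hf hg t t0.
have [df /andP[f1 f2]] := hf t t0; have [dg /andP[g1 g2]] := hg t t0.
split; first exact: derivableD.
rewrite derive1E deriveD // -!derive1E.
by have := f0 t t0; have := g0 t t0; move=> *; apply/andP; split; nra.
Qed.

Lemma dlog_boundedMr c f b : 0 < b -> dlog_bounded c f ->
  dlog_bounded c (fun t => f t * b).
Proof.
move=> b0 hf t t0; have [df /andP[f1 f2]] := hf t t0.
split; first by apply: derivableM => //; exact: derivable_cst.
by rewrite derive1Mr // !mulrA pmulr_lgt0 // ler_pM2r // f1.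
Qed.

Lemma dlog_boundedM c1 c2 f g :
  (forall t, 0 < t -> 0 < f t) -> (forall t, 0 < t -> 0 < g t) ->
  dlog_bounded c1 f -> dlog_bounded c2 g ->
  dlog_bounded (c1 + c2) (fun t => f t * g t).
Proof.
move=> f0 g0 hf hg t t0.
have [df /andP[f1 f2]] := hf t t0; have [dg /andP[g1 g2]] := hg t t0.
split; first exact: derivableM.
have -> : derive1 (fun t => f t * g t) t = f t * derive1 g t + g t * derive1 f t.
  by rewrite !derive1E; exact: deriveM.
by have := f0 t t0; have := g0 t t0; move=> *; apply/andP; split; nra.
Qed.

(* [t (f o g)'(t) = (g t f'(g t)) (t g'(t)) / g t]. *)
Lemma dlog_bounded_comp c1 c2 f g : (forall t, 0 < t -> 0 < g t) ->
  dlog_bounded c1 f -> dlog_bounded c2 g -> dlog_bounded (c1 * c2) (fun t => f (g t)).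
Proof.
move=> g0 hf hg t t0; have gt0 := g0 t t0.
have [dg /andP[g1 g2]] := hg t t0; have [df /andP[f1 f2]] := hf _ gt0.
split.
  by apply/derivable1_diffP; apply: differentiable_comp; exact/derivable1_diffP.
rewrite (derive1_comp dg df).
have -> : t * (derive1 f (g t) * derive1 g t) =
  (g t * derive1 f (g t)) * (t * derive1 g t) / g t by field; rewrite gt_eqF.
rewrite divr_gt0 ?(mulr_gt0 f1 g1) //= ler_pdivrMr //.
apply: (le_trans (ler_pM (ltW f1) (ltW g1) f2 g2)).
by rewrite mulrACA mulrA.
Qed.

End profiles.

Section ae_measurable_theory.
Context d (T : measurableType d) (R : realType).
Variables (mu : {measure set T -> \bar R}) (D : set T).
Implicit Types f g : T -> R.

Lemma ae_measurable_eq f g : ae_measurable mu D f ->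
  {ae mu, forall p, D p -> f p = g p} -> ae_measurable mu D g.
Proof.
move=> [F [mF eF]] e; exists F; split => //.
by apply: filterS2 eF e => p h1 h2 Dp; rewrite -h2 // h1.
Qed.

Lemma measurable_ae_measurable f : measurable_fun D f -> ae_measurable mu D f.
Proof. by move=> mf; exists f; split => //; exact: aeW. Qed.

Lemma ae_measurable2 (op : R -> R -> R) f g :
  (forall F G, measurable_fun D F -> measurable_fun D G ->
     measurable_fun D (fun p => op (F p) (G p))) ->
  ae_measurable mu D f -> ae_measurable mu D g ->
  ae_measurable mu D (fun p => op (f p) (g p)).
Proof.
move=> mop [F [mF eF]] [G [mG eG]]; exists (fun p => op (F p) (G p)).
by split; [exact: mop | apply: filterS2 eF eG => p h1 h2 Dp; rewrite h1 ?h2].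
Qed.

Lemma ae_measurableD f g : ae_measurable mu D f -> ae_measurable mu D g ->
  ae_measurable mu D (fun p => f p + g p).
Proof. by apply: ae_measurable2 => F G; exact: measurable_funD. Qed.

Lemma ae_measurableM f g : ae_measurable mu D f -> ae_measurable mu D g ->
  ae_measurable mu D (fun p => f p * g p).
Proof. by apply: ae_measurable2 => F G; exact: measurable_funM. Qed.

Lemma ae_measurable_bigmax (h : nat -> T -> R) n :
  (forall k, ae_measurable mu D (h k)) ->
  ae_measurable mu D (fun p => \big[Num.max/0]_(k < n) h k p).
Proof.
move=> hm.
have -> : (fun p => \big[Num.max/0]_(k < n) h k p) =
    \big[(fun F G p => Num.max (F p) (G p))/fun=> 0]_(k < n) h k.
  by apply/funext => p; elim/big_ind2 : _ => // x F y G -> ->.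
elim/big_ind : _ => //; first exact/measurable_ae_measurable/measurable_cst.
by move=> F G; apply: ae_measurable2 => F' G'; exact: measurable_maxr.
Qed.

Lemma ae_measurable_choice (h : nat -> T -> R) :
  (forall n, ae_measurable mu D (h n)) ->
  exists F : nat -> T -> R, (forall n, measurable_fun D (F n)) /\
    {ae mu, forall p, forall n, D p -> h n p = F n p}.
Proof.
move=> hm; have /choice[F hF] : forall n, exists F, measurable_fun D F /\
    {ae mu, forall p, D p -> h n p = F p} by move=> n; exact: hm.
by exists F; split=> [n|]; [exact: (hF n).1 | apply: ae_foralln => n; exact: (hF n).2].
Qed.

(* Modify the measurable representatives on one negligible set outside of which
   they all agree with the [f_ n] and the [f_ n] converge. *)
Lemma ae_measurable_cvg (f_ : nat -> T -> R) f :
  (forall n, ae_measurable mu D (f_ n)) ->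
  {ae mu, forall p, D p -> f_ ^~ p @ \oo --> f p} -> ae_measurable mu D f.
Proof.
move=> /ae_measurable_choice[F [mF hall]] hc.
have [N [mN N0 sN]] := filterI hall hc.
have good p : (~` N) p -> (forall n, D p -> f_ n p = F n p) /\
    (D p -> f_ ^~ p @ \oo --> f p).
  by move=> pN; apply: contrapT => H; apply: pN; apply: sN.
have ind1 p : (~` N) p -> \1_(~` N) p = 1 :> R by move=> pN; rewrite indicE mem_set.
exists (fun p => f p * \1_(~` N) p); split.
  move=> mD; apply: (measurable_fun_cvg (h := fun n p => F n p * \1_(~` N) p)) => //.
    by move=> n; apply: measurable_funM (mF n) _; exact/measurable_indic/measurableC.
  move=> p Dp; have [pN|pN] := pselect ((~` N) p).
    under eq_fun do rewrite ind1 // mulr1; rewrite ind1 // mulr1.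
    have [eqF cvf] := good p pN; apply: cvg_trans (cvf Dp).
    by apply: near_eq_cvg; near=> n; rewrite eqF.
  have ind0 : \1_(~` N) p = 0 :> R by rewrite indicE memNset.
  by under eq_fun do rewrite ind0 mulr0; rewrite ind0 mulr0; exact: cvg_cst.
exists N; split => // p /= H; apply: contrapT => pN; apply: H => Dp.
by rewrite ind1 ?mulr1.
Unshelve. all: end_near.
Qed.

Lemma ae_measurable_select (h : nat -> T -> R) (J : T -> nat) :
  (forall j, ae_measurable mu D (h j)) ->
  (forall j, measurable D -> measurable (D `&` [set p | J p = j])) ->
  ae_measurable mu D (fun p => h (J p) p).
Proof.
move=> /ae_measurable_choice[F [mF hall]] hJ.
exists (fun p => F (J p) p); split; last first.
  by apply: filterS hall => p hp Dp; exact: hp.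
move=> mD Y mY.
have -> : D `&` (fun p => F (J p) p) @^-1` Y =
    \bigcup_j ((D `&` [set p | J p = j]) `&` (D `&` F j @^-1` Y)).
  apply/seteqP; split => p /=; first by move=> [Dp Yp]; exists (J p).
  by move=> [j _ [[Dp <-] [_ Yp]]].
by apply: bigcupT_measurable => j; apply: measurableI; [exact: hJ | exact: mF].
Qed.

End ae_measurable_theory.

Lemma bigmax_two_valued (R : realType) (h : nat -> R) c n : 0 <= c ->
  (forall k, h k = 0 \/ h k = c) ->
  \big[Num.max/0]_(k < n) h k = if `[< exists2 k, (k < n)%N & h k = c >] then c else 0.
Proof.
move=> c0 hc; case: asboolP => [[k kn hk]|none].
  apply/le_anti/andP; split; first by apply: bigmax_le => // i _; case: (hc i) => ->.
  by rewrite -hk (le_bigmax 0 (fun i : 'I_n => h i) (Ordinal kn)).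
elim/big_ind : _ => // [x y -> ->|i _]; first exact: maxxx.
by case: (hc i) => // hi; exfalso; apply: none; exists i.
Qed.

Section separating_boxes.
Variables (R : realType) (d : nat).
Local Notation Rd := 'rV[R]_d.

Lemma box_measurable (a b : Rd) : measurable (box a b).
Proof.
have -> : box a b = \bigcap_(i in [set: 'I_d])
    (rV_coord i @^-1` `]a ord0 i, b ord0 i]%classic).
  by apply/seteqP; split => x /= h i; [move=> _; rewrite /= in_itv; exact: h |
    have := h i I; rewrite /= in_itv].
apply: fin_bigcap_measurable; first exact: finite_finset.
move=> i _; apply: sub_sigma_algebra; rewrite (bigD1 i) //=; left.
by exists `]a ord0 i, b ord0 i]%classic; [exact: measurable_itv | rewrite setTI].
Qed.

(* Boxes [-N, N]^d cut in one coordinate at a rational: a countable family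
   that separates points. *)
Definition sep_box (k : nat) : set Rd :=
  if unpickle k is Some (i, r, N) then
    box (\row_j (- N%:R)) (\row_j (if j == i then Num.max (ratr r) (- N%:R) else N%:R))
  else set0.

Lemma sep_box_measurable k : measurable (sep_box k).
Proof. by rewrite /sep_box; case: unpickle => [[[i r] N]|] //; exact: box_measurable. Qed.

Lemma sep_box_finite (lam : {measure set Rd -> \bar R}) k :
  is_lebesgue lam -> (lam (sep_box k) < +oo)%E.
Proof.
move=> leb; rewrite /sep_box; case: unpickle => [[[i r] N]|]; last by rewrite measure0.
rewrite leb ?ltry // => j; rewrite !mxE.
by case: ifP => _; [rewrite le_max lexx orbT | rewrite -subr_ge0 opprK addr_ge0].
Qed.

Lemma sep_box_lt (u v : Rd) (i : 'I_d) (N : nat) :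
  (forall j, `|u ord0 j| < N%:R) -> `|v ord0 i| < N%:R -> u ord0 i < v ord0 i ->
  exists k, sep_box k u /\ ~ sep_box k v.
Proof.
move=> uN vN uv; have [r] := rat_in_itvoo uv; rewrite in_itv /= => /andP[ur rv].
exists (pickle (i, r, N)); rewrite /sep_box pickleK; split.
  move=> j; rewrite !mxE; have := uN j; rewrite ltr_norml => /andP[h1 h2].
  apply/andP; split => //; case: ifP => [/eqP ->|_]; last exact: ltW.
  by rewrite le_max (ltW ur).
move=> /(_ i); rewrite !mxE eqxx => /andP[_]; rewrite le_max.
by move: vN; rewrite ltr_norml => /andP[h1 h2] /orP[]; lra.
Qed.

Lemma sep_box_separates (x y : Rd) : x != y ->
  exists k, (sep_box k x /\ ~ sep_box k y) \/ (~ sep_box k x /\ sep_box k y).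
Proof.
move=> xy; have [i xiy] : exists i, x ord0 i != y ord0 i.
  apply/existsP; rewrite -negb_forall; apply: contra xy => /forallP h.
  by apply/eqP/rowP => j; apply/eqP; exact: h.
pose N := (Num.truncn (\sum_j (`|x ord0 j| + `|y ord0 j|))).+1.
have bound j : `|x ord0 j| < N%:R /\ `|y ord0 j| < N%:R.
  have : \sum_j (`|x ord0 j| + `|y ord0 j|) < N%:R by rewrite truncnS_gt.
  rewrite (bigD1 j) //=.
  have : 0 <= \sum_(k | k != j) (`|x ord0 k| + `|y ord0 k|).
    by apply: sumr_ge0 => k _; rewrite addr_ge0.
  by have := normr_ge0 (x ord0 j); have := normr_ge0 (y ord0 j); split; lra.
have [xy'|yx'] := ltP (x ord0 i) (y ord0 i).
  have [k ?] := sep_box_lt (fun j => (bound j).1) (bound i).2 xy'.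
  by exists k; left.
have [k [? ?]] : exists k, sep_box k y /\ ~ sep_box k x.
  apply: sep_box_lt (fun j => (bound j).2) (bound i).1 _.
  by rewrite lt_neqAle yx' eq_sym xiy.
by exists k; right.
Qed.

End separating_boxes.

Lemma truncn_level_measurable (R : realType) (j : nat) :
  measurable [set x : R | Num.truncn x = j].
Proof.
case: j => [|j].
  have -> : [set x : R | Num.truncn x = 0%N] = `]-oo, 1[%classic.
    apply/seteqP; split => x /=; rewrite in_itv /=.
      by move=> h; rewrite -[1]/(0%N.+1%:R) -truncn_le_nat h.
    by move=> h; apply/eqP; rewrite -leqn0 truncn_le_nat.
  exact: measurable_itv.
have -> : [set x : R | Num.truncn x = j.+1] = `[j.+1%:R, j.+2%:R[%classic.
  apply/seteqP; split => x /=; rewrite in_itv /=.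
    by move=> h; rewrite -truncn_gt_nat -truncn_le_nat h leqnn.
  move=> /andP[h1 h2]; apply/eqP; rewrite eqn_leq truncn_le_nat h2 /=.
  by rewrite truncn_gt_nat.
exact: measurable_itv.
Qed.

Lemma truncn_approx_cvg (R : realType) (x : R) : 0 <= x ->
  (fun n => (Num.truncn (n.+1%:R * x))%:R / n.+1%:R) @ \oo --> x.
Proof.
move=> x0; apply/cvgrPdist_le => eps eps0; near=> n.
have /andP[lo hi] := truncn_itv (mulr_ge0 (ler0n _ n.+1) x0).
have -> : x - (Num.truncn (n.+1%:R * x))%:R / n.+1%:R =
  (n.+1%:R * x - (Num.truncn (n.+1%:R * x))%:R) / n.+1%:R by field.
rewrite ger0_norm ?divr_ge0 ?subr_ge0 //.
apply: (@le_trans _ _ n.+1%:R^-1).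
  by rewrite ler_pdivrMr // mulVf // lerBlDr addrC natr1 ltW.
by apply: ltW; near: n; exact: (near_infty_natSinv_lt (PosNum eps0)).
Unshelve. all: end_near.
Qed.

Section integral_le_setT.
Import HBNNSimple.

Lemma ge0_integral_le_setT d (T : measurableType d) (R : realType)
    (mu : {measure set T -> \bar R}) (D : set T) (f g : T -> \bar R) :
  (forall x, D x -> (0 <= f x)%E) -> (forall x, (0 <= g x)%E) ->
  (forall x, D x -> (f x <= g x)%E) ->
  (\int[mu]_(x in D) f x <= \int[mu]_x g x)%E.
Proof.
move=> f0 g0 fg; rewrite ge0_integralE // ge0_integralTE //.
apply: ge_ereal_sup => _ [h /= hf <-]; apply: le_ereal_sup_tmp.
exists (sintegral mu h) => //; exists h => // x; apply: le_trans (hf x) _.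
rewrite /patch; case: ifP => [|_]; last exact: g0.
by rewrite inE; exact: fg.
Qed.

End integral_le_setT.

Section slices.
Variables (R : realType) (d : nat) (Omega : set 'rV[R]_d)
  (Lam : {measure set ('rV[R]_d * 'rV[R]_d) -> \bar R}).
Local Notation Rd := 'rV[R]_d.
Local Notation D := (OO Omega).
Implicit Types phi : R -> Rd -> Rd -> R.

Definition slice phi (p : Rd * Rd) : R -> R := fun s => phi s p.1 p.2.

Lemma C4_C5_growth_fun phi : C4 Lam Omega phi -> C5 Lam Omega phi ->
  {ae Lam, forall p, D p -> growth_fun (slice phi p)}.
Proof.
move=> [c1 [_ h4]] [c2 [_ h5]]; apply: filterS2 h4 h5 => p H4 H5 Dp.
by have [_ ? ?] := H4 Dp; apply: dlog_bounded_growth_fun (H5 Dp).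
Qed.

Lemma C4_at0 phi : C4 Lam Omega phi -> {ae Lam, forall p, D p -> phi 0 p.1 p.2 = 0}.
Proof. by case=> c [_ H]; apply: filterS H => p h Dp; case: (h Dp). Qed.

Lemma C0_slice phi : C0 Omega phi ->
  forall p, D p -> forall t, 0 < t -> 0 <= slice phi p t.
Proof. by move=> h p [? ?] t /ltW t0; exact: h. Qed.

End slices.

Section C1_composition.
Variables (R : realType) (d : nat) (Omega : set 'rV[R]_d)
  (lam : {measure set 'rV[R]_d -> \bar R})
  (Lam : {measure set ('rV[R]_d * 'rV[R]_d) -> \bar R}).
Local Notation Rd := 'rV[R]_d.
Local Notation D := (OO Omega).
Local Notation normc := ComplexField.Normc.normc.
Implicit Types phi psi : R -> Rd -> Rd -> R.

Lemma normc_real (a : R) : normc (a%:C)%C = `|a|.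
Proof. by rewrite /normc /= expr0n /= addr0 sqrtr_sqr. Qed.

Lemma indic_L1loc (A : set Rd) (q : R) : measurable A -> (lam A < +oo)%E -> 0 <= q ->
  L1loc lam Omega (fun x => ((q * \1_A x)%:C)%C).
Proof.
move=> mA lA q0; exists (fun x => ((q * \1_A x)%:C)%C); split => //=.
- by apply: measurable_funM; [exact: measurable_cst | exact: measurable_indic].
- exact: aeW.
move=> K _ _.
apply: (@le_lt_trans _ _ (\int[lam]_x (q * \1_A x)%:E)%E).
  apply: ge0_integral_le_setT => [x _|x|x _];
    rewrite ?expr0n /= ?addr0 ?sqrtr_sqr lee_fin //.
  - by rewrite mulr_ge0 // indic_ge0.
  - by rewrite ger0_norm // mulr_ge0 // indic_ge0.
rewrite (@integralZl_indic _ _ _ _ _ measurableT (fun=> A)) //=; last first.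
  by move=> /lt_le_trans /(_ q0); rewrite ltxx.
rewrite integral_indic ?setIT //.
have lAfin : lam A \is a fin_num by rewrite ge0_fin_numE.
by rewrite -(fineK lAfin) -EFinM ltry.
Qed.

Definition box_gap k (p : Rd * Rd) : R :=
  `|\1_(sep_box k) p.1 - \1_(sep_box k) p.2|.

Lemma box_gap01 k p : box_gap k p = 0 \/ box_gap k p = 1.
Proof.
rewrite /box_gap !indicE; case: (_ \in _); case: (_ \in _);
  by [left; rewrite subrr normr0 | right; rewrite ?subr0 ?sub0r ?normrN normr1].
Qed.

Lemma C1_box_gap phi k q : is_lebesgue lam -> C4 Lam Omega phi ->
  C1 lam Lam Omega phi -> 0 <= q ->
  ae_measurable Lam D (fun p => phi q p.1 p.2 * box_gap k p).
Proof.
move=> leb h4 h1 q0.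
apply: ae_measurable_eq (h1 _ (indic_L1loc (sep_box_measurable k)
  (sep_box_finite k leb) q0)) _.
apply: filterS (C4_at0 h4) => p phi0 Dp.
rewrite -raddfB -mulrBr normc_real normrM ger0_norm // -/(box_gap k p).
by case: (box_gap01 k p) => ->; rewrite ?mulr0 ?phi0 ?mulr1.
Qed.

(* On the diagonal every [box_gap k] vanishes; off the diagonal some box
   separates [p.1] from [p.2], so the running maximum of the
   [phi q * box_gap k] is eventually [phi q]. *)
Lemma C1_offdiag phi q : is_lebesgue lam -> C0 Omega phi -> C4 Lam Omega phi ->
  C1 lam Lam Omega phi -> 0 <= q ->
  ae_measurable Lam D (fun p => phi q p.1 p.2 * (p.1 != p.2)%:R).
Proof.
move=> leb h0 h4 h1 q0.
pose M n p : R := \big[Num.max/0]_(k < n) (phi q p.1 p.2 * box_gap k p).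
apply: (@ae_measurable_cvg _ _ _ Lam D M).
  move=> n; apply: (ae_measurable_bigmax (h := fun k p => phi q p.1 p.2 * box_gap k p)).
  by move=> k; exact: C1_box_gap.
apply: aeW => p [x1 x2].
have hM n : M n p = if `[< exists2 k, (k < n)%N & phi q p.1 p.2 * box_gap k p =
    phi q p.1 p.2 >] then phi q p.1 p.2 else 0.
  apply: bigmax_two_valued; first exact: h0.
  by move=> k; case: (box_gap01 k p) => ->; [left; rewrite mulr0 | right; rewrite mulr1].
case: (eqVneq p.1 p.2) => [e|/sep_box_separates[k0 hk0]] /=.
  rewrite mulr0; apply: cvg_near_cst; near=> n; rewrite hM.
  case: asboolP => // -[k _]; rewrite /box_gap e subrr normr0 mulr0 => phi0.
  by rewrite -phi0.
rewrite mulr1; apply: cvg_near_cst; near=> n; rewrite hM; case: asboolP => // -[].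
exists k0; first by near: n; exact: nbhs_infty_gt.
rewrite /box_gap !indicE.
case: hk0 => -[in1 in2].
  by rewrite (mem_set in1) (memNset in2) subr0 normr1 mulr1.
by rewrite (memNset in1) (mem_set in2) sub0r normrN normr1 mulr1.
Unshelve. all: end_near.
Qed.

Lemma C1_comp phi psi : is_lebesgue lam ->
  C0 Omega phi -> C4 Lam Omega phi -> C5 Lam Omega phi -> C1 lam Lam Omega phi ->
  C0 Omega psi -> C4 Lam Omega psi -> C1 lam Lam Omega psi ->
  C1 lam Lam Omega (fun z x y => phi (psi z x y) x y).
Proof.
move=> leb h0 h4 h5 h1 h0' h4' h1' u hu.
have [G [mG eG]] := h1' u hu.
pose J n p := Num.truncn (n.+1%:R * G p).
pose F n p := phi ((J n p)%:R / n.+1%:R) p.1 p.2 * (p.1 != p.2)%:R.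
apply: (ae_measurable_cvg (f_ := F)).
  move=> n; apply: (ae_measurable_select (J := J n) (h := fun j p =>
    phi (j%:R / n.+1%:R) p.1 p.2 * (p.1 != p.2)%:R)).
    by move=> j; apply: C1_offdiag; rewrite ?divr_ge0.
  move=> j mD; have mnG : measurable_fun D (fun p => n.+1%:R * G p).
    exact: measurable_funM.
  exact: (mnG mD _ (truncn_level_measurable j)).
apply: filterS2 (filterI eG (C4_C5_growth_fun h4 h5)) (filterI (C4_at0 h4') (C4_at0 h4)).
move=> p [eGp gp] [psi0 phi0] Dp; rewrite /= in eGp.
case: (eqVneq p.1 p.2) => [e|ne].
  have := psi0 Dp; have := phi0 Dp; rewrite e => {}phi0 {}psi0.
  rewrite /F e eqxx /= subrr ComplexField.Normc.normc0 psi0 phi0.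
  by under eq_fun do rewrite mulr0; exact: cvg_cst.
rewrite /F ne /=; under eq_fun do rewrite mulr1.
rewrite eGp //.
have : 0 <= G p.
  rewrite -eGp //; case: Dp => Dx Dy; apply: h0' => //.
  by case: (u _ - u _) => a b; rewrite /ComplexField.Normc.normc sqrtr_ge0.
rewrite le_eqVlt => /predU1P[G0|Gpos].
  rewrite /J -G0; under eq_fun do rewrite mulr0 truncn0 mul0r.
  exact: cvg_cst.
apply: continuous_cvg (growth_fun_continuous (gp Dp) Gpos) _.
exact: truncn_approx_cvg (ltW Gpos).
Qed.

End C1_composition.

Section closure.
Variables (R : realType) (d : nat) (Omega : set 'rV[R]_d)
  (lam : {measure set 'rV[R]_d -> \bar R})
  (Lam : {measure set ('rV[R]_d * 'rV[R]_d) -> \bar R}).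
Local Notation Rd := 'rV[R]_d.
Local Notation D := (OO Omega).
Implicit Types (phi psi : R -> Rd -> Rd -> R) (b : Rd -> Rd -> R).

Lemma C0_add phi psi : C0 Omega phi -> C0 Omega psi ->
  C0 Omega (fun z x y => phi z x y + psi z x y).
Proof. by move=> h1 h2 t x y t0 ox oy; rewrite addr_ge0 ?h1 ?h2. Qed.

Lemma C0_scale phi b : (forall x y, Omega x -> Omega y -> 0 < b x y) ->
  C0 Omega phi -> C0 Omega (fun z x y => phi z x y * b x y).
Proof. by move=> hb h1 t x y t0 ox oy; rewrite mulr_ge0 ?h1 // ltW ?hb. Qed.

Lemma C0_mul phi psi : C0 Omega phi -> C0 Omega psi ->
  C0 Omega (fun z x y => phi z x y * psi z x y).
Proof. by move=> h1 h2 t x y t0 ox oy; rewrite mulr_ge0 ?h1 ?h2. Qed.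

Lemma C0_comp phi psi : C0 Omega phi -> C0 Omega psi ->
  C0 Omega (fun z x y => phi (psi z x y) x y).
Proof. by move=> h1 h2 t x y t0 ox oy; rewrite h1 ?h2. Qed.

Lemma C1_add phi psi : C1 lam Lam Omega phi -> C1 lam Lam Omega psi ->
  C1 lam Lam Omega (fun z x y => phi z x y + psi z x y).
Proof. by move=> h1 h2 u hu; apply: ae_measurableD; [exact: h1 | exact: h2]. Qed.

Lemma C1_scale phi b : ae_measurable Lam D (fun p => b p.1 p.2) ->
  C1 lam Lam Omega phi -> C1 lam Lam Omega (fun z x y => phi z x y * b x y).
Proof. by move=> hb h1 u hu; apply: ae_measurableM; [exact: h1 | exact: hb]. Qed.

Lemma C1_mul phi psi : C1 lam Lam Omega phi -> C1 lam Lam Omega psi ->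
  C1 lam Lam Omega (fun z x y => phi z x y * psi z x y).
Proof. by move=> h1 h2 u hu; apply: ae_measurableM; [exact: h1 | exact: h2]. Qed.

Lemma C2_add phi psi : C0 Omega phi -> C0 Omega psi ->
  C2 Lam Omega phi -> C2 Lam Omega psi ->
  C2 Lam Omega (fun z x y => phi z x y + psi z x y).
Proof.
move=> h01 h02 h1 h2 eps eps0.
have [d1 [/andP[d10 d11] H1]] := h1 eps eps0.
have [d2 [/andP[d20 d21] H2]] := h2 eps eps0.
exists (Num.min d1 d2); split; first by rewrite lt_min d10 d20 gt_min d11.
apply: filterS2 H1 H2 => p K1 K2 Dp.
exact: midpoint_gapD (C0_slice h01 Dp) (C0_slice h02 Dp) (K1 Dp) (K2 Dp).
Qed.

Lemma C2_scale phi b : (forall x y, Omega x -> Omega y -> 0 < b x y) ->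
  C2 Lam Omega phi -> C2 Lam Omega (fun z x y => phi z x y * b x y).
Proof.
move=> hb h1 eps eps0; have [d1 [dd H1]] := h1 eps eps0; exists d1; split => //.
apply: filterS H1 => p K1 [x1 x2].
exact: midpoint_gapMr (hb _ _ x1 x2) (K1 (conj x1 x2)).
Qed.

Lemma C2_mul phi psi : C4 Lam Omega phi -> C4 Lam Omega psi ->
  C5 Lam Omega phi -> C5 Lam Omega psi -> C2 Lam Omega phi -> C2 Lam Omega psi ->
  C2 Lam Omega (fun z x y => phi z x y * psi z x y).
Proof.
move=> h41 h42 h51 h52 h1 h2 eps eps0.
have [d1 [/andP[d10 d11] H1]] := h1 eps eps0.
have [d2 [d2i H2]] := h2 eps eps0.
exists d1; split; first by rewrite d10.
apply: filterS2 (filterI (C4_C5_growth_fun h41 h51) (C4_C5_growth_fun h42 h52))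
  (filterI H1 H2) => p [G1 G2] [K1 K2] Dp.
exact: midpoint_gapM (G1 Dp) (G2 Dp) d11 d2i (K1 Dp) (K2 Dp).
Qed.

Lemma C2_comp phi psi : C4 Lam Omega phi -> C4 Lam Omega psi ->
  C5 Lam Omega phi -> C5 Lam Omega psi -> C2 Lam Omega phi -> C2 Lam Omega psi ->
  C2 Lam Omega (fun z x y => phi (psi z x y) x y).
Proof.
move=> h41 h42 h51 h52 h1 h2 eps eps0.
have [dg [dgi Hg]] := h2 eps eps0; have /andP[dg0 _] := dgi.
have [da [/andP[da0 da1] Ha]] := h1 (dg / 2) (divr_gt0 dg0 (ltr0Sn _ _)).
have [db [/andP[db0 db1] Hb]] := h1 (dg / 4) (divr_gt0 dg0 (ltr0Sn _ _)).
exists (Num.min da db); split; first by rewrite lt_min da0 db0 gt_min da1.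
apply: filterS2 (filterI (C4_C5_growth_fun h41 h51) (C4_C5_growth_fun h42 h52))
  (filterI Hg (filterI Ha Hb)) => p [G1 G2] [L [La Lb]] Dp.
exact: midpoint_gap_comp (G1 Dp) (G2 Dp) dgi da1 (L Dp) (La Dp) (Lb Dp).
Qed.

Lemma C3P phi : C3 Lam Omega phi <-> exists pm pp beta, [/\ 1 < pm, pm <= pp, 1 <= beta &
  {ae Lam, forall p, D p -> almost_pow_bounds beta pm pp (slice phi p)}].
Proof.
split=> -[pm [pp [beta [h1 h2 h3 H]]]]; exists pm, pp, beta; split => //;
  by apply: filterS H => p K Dp; apply/almost_pow_boundsE; exact: K.
Qed.

Lemma C3_add phi psi : C0 Omega phi -> C0 Omega psi ->
  C3 Lam Omega phi -> C3 Lam Omega psi ->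
  C3 Lam Omega (fun z x y => phi z x y + psi z x y).
Proof.
move=> h01 h02 /C3P[pm1 [pp1 [b1 [p1 q1 c1 H1]]]] /C3P[pm2 [pp2 [b2 [p2 q2 c2 H2]]]].
apply/C3P; exists (Num.min pm1 pm2), (Num.max pp1 pp2), (b1 + b2).
split; [by rewrite lt_min p1 p2 | by rewrite ge_min le_max q1 | lra |].
apply: filterS2 H1 H2 => p K1 K2 Dp.
have n1 := C0_slice h01 Dp; have n2 := C0_slice h02 Dp.
apply: almost_pow_boundsD; rewrite ?(le_trans ler01) //.
  apply: almost_pow_bounds_widen (K1 Dp); rewrite ?ge_min ?le_max ?lexx //.
  exact: le_trans ler01 c1.
apply: almost_pow_bounds_widen (K2 Dp); rewrite ?ge_min ?le_max ?lexx ?orbT //.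
exact: le_trans ler01 c2.
Qed.

Lemma C3_scale phi b : (forall x y, Omega x -> Omega y -> 0 < b x y) ->
  C3 Lam Omega phi -> C3 Lam Omega (fun z x y => phi z x y * b x y).
Proof.
move=> hb /C3P[pm [pp [b1 [p1 q1 c1 H1]]]]; apply/C3P; exists pm, pp, b1; split => //.
by apply: filterS H1 => p K1 [x1 x2]; apply: almost_pow_boundsMr (hb _ _ x1 x2) (K1 _).
Qed.

Lemma C3_mul phi psi : C0 Omega phi -> C0 Omega psi ->
  C3 Lam Omega phi -> C3 Lam Omega psi ->
  C3 Lam Omega (fun z x y => phi z x y * psi z x y).
Proof.
move=> h01 h02 /C3P[pm1 [pp1 [b1 [p1 q1 c1 H1]]]] /C3P[pm2 [pp2 [b2 [p2 q2 c2 H2]]]].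
apply/C3P; exists (pm1 + pm2), (pp1 + pp2), (b1 * b2); split; [lra | lra | nra |].
apply: filterS2 H1 H2 => p K1 K2 Dp.
exact: almost_pow_boundsM (C0_slice h01 Dp) (C0_slice h02 Dp) (K1 Dp) (K2 Dp).
Qed.

Lemma C3_comp phi psi : C0 Omega phi -> C4 Lam Omega psi -> C5 Lam Omega psi ->
  C3 Lam Omega phi -> C3 Lam Omega psi ->
  C3 Lam Omega (fun z x y => phi (psi z x y) x y).
Proof.
move=> h01 h42 h52 /C3P[pm1 [pp1 [b1 [p1 q1 c1 H1]]]] /C3P[pm2 [pp2 [b2 [p2 q2 c2 H2]]]].
have b2pp : 1 <= b2 `^ pp1 by rewrite -(powRr0 b2) ler_powR //; lra.
apply/C3P; exists (pm2 * pm1), (pp2 * pp1), (b1 * b2 `^ pp1).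
split; [nra | by apply: ler_pM; lra | nra |].
apply: filterS2 (C4_C5_growth_fun h42 h52) (filterI H1 H2) => p G2 [K1 K2] Dp.
apply: almost_pow_bounds_comp (G2 Dp) _ _ c2 (C0_slice h01 Dp) (K1 Dp) (K2 Dp).
  by rewrite q1 andbT; lra.
lra.
Qed.

Lemma C4_add phi psi : C4 Lam Omega phi -> C4 Lam Omega psi ->
  C4 Lam Omega (fun z x y => phi z x y + psi z x y).
Proof.
move=> [c1 [c10 H1]] [c2 [c20 H2]]; exists (c1 + c2); split; first exact: addr_gt0.
apply: filterS2 H1 H2 => p K1 K2 Dp.
have [/andP[l1 u1] z1 q1] := K1 Dp; have [/andP[l2 u2] z2 q2] := K2 Dp.
split.
- apply/andP; split; last by rewrite lerD.
  have : (c1 + c2)^-1 <= c1^-1 by rewrite lef_pV2 ?posrE ?addr_gt0 // lerDl ltW.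
  have : 0 <= c2^-1 by rewrite invr_ge0 ltW.
  by move=> *; lra.
- by rewrite z1 z2 addr0.
- by move=> t t0; rewrite addr_gt0 ?q1 ?q2.
Qed.

Lemma C4_scale phi b (c5 c6 : R) : 0 < c5 ->
  (forall x y, Omega x -> Omega y -> c5 < b x y < c6) ->
  C4 Lam Omega phi -> C4 Lam Omega (fun z x y => phi z x y * b x y).
Proof.
move=> c50 hb [c1 [c10 H1]]; have c5i : 0 < c5^-1 by rewrite invr_gt0.
have C0 : 0 < `|c6| + c5^-1 by have := normr_ge0 c6; lra.
exists (c1 * (`|c6| + c5^-1)); split; first exact: mulr_gt0.
apply: filterS H1 => p K1 [x1 x2]; have [/andP[l1 u1] z1 q1] := K1 (conj x1 x2).
have /andP[bl bu] := hb _ _ x1 x2; have b0 := lt_trans c50 bl.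
have phi10 : 0 <= phi 1 p.1 p.2 by apply: le_trans l1; rewrite invr_ge0 ltW.
split.
- apply/andP; split.
    rewrite invfM; apply: ler_pM => //; rewrite ?invr_ge0 ?(ltW c10) ?(ltW C0) //.
    apply: le_trans _ (ltW bl); rewrite -[leRHS]invrK lef_pV2 ?posrE // lerDr.
    exact: normr_ge0.
  apply: ler_pM => //; first exact: ltW.
  by apply: (le_trans (ltW bu)); rewrite (le_trans (ler_norm _)) // lerDl ltW.
- by rewrite z1 mul0r.
- by move=> t t0; rewrite mulr_gt0 ?q1.
Qed.

Lemma C4_mul phi psi : C4 Lam Omega phi -> C4 Lam Omega psi ->
  C4 Lam Omega (fun z x y => phi z x y * psi z x y).
Proof.
move=> [c1 [c10 H1]] [c2 [c20 H2]]; exists (c1 * c2); split; first exact: mulr_gt0.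
apply: filterS2 H1 H2 => p K1 K2 Dp.
have [/andP[l1 u1] z1 q1] := K1 Dp; have [/andP[l2 u2] z2 q2] := K2 Dp.
have c1i : 0 <= c1^-1 by rewrite invr_ge0 ltW.
have c2i : 0 <= c2^-1 by rewrite invr_ge0 ltW.
split.
- apply/andP; split; first by rewrite invfM; apply: ler_pM.
  by apply: ler_pM => //; [exact: le_trans l1 | exact: le_trans l2].
- by rewrite z1 mul0r.
- by move=> t t0; rewrite mulr_gt0 ?q1 ?q2.
Qed.

Lemma C4_comp phi psi : C0 Omega phi -> C3 Lam Omega phi ->
  C4 Lam Omega phi -> C4 Lam Omega psi ->
  C4 Lam Omega (fun z x y => phi (psi z x y) x y).
Proof.
move=> h01 /C3P[pm [pp [b1 [p1 q1 be1 H3]]]] [c1 [c10 H1]] [c2 [c20 H2]].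
exists (b1 * c2 `^ pp * c1); split.
  by rewrite mulr_gt0 // mulr_gt0 ?powR_gt0 //; lra.
apply: filterS2 H3 (filterI H1 H2) => p K3 [K1 K2] Dp.
have [/andP[l1 u1] z1 q1'] := K1 Dp; have [l2 z2 q2] := K2 Dp.
have phi10 : 0 < phi 1 p.1 p.2 by apply: q1'.
have psi10 : 0 < psi 1 p.1 p.2 by apply: q2.
have pm0 : 0 <= pm <= pp by apply/andP; split; lra.
have b10 : 0 <= b1 by lra.
have [up lo] := almost_pow_bounds_sandwich (f := slice phi p) (c := c2)
  (a := psi 1 p.1 p.2) pm0 b10 (ltW phi10) (C0_slice h01 Dp psi10) c20 l2 (K3 Dp).
rewrite /slice in up lo.
split.
- apply/andP; split.
    have K0 : 0 < b1 * c2 `^ pp by rewrite mulr_gt0 ?powR_gt0 //; lra.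
    by rewrite invfM mulrC ler_pdivrMr // mulrC (le_trans l1 lo).
  by apply: (le_trans up); rewrite ler_wpM2l // mulr_ge0 ?powR_ge0 //; lra.
- by rewrite z2 z1.
- by move=> t t0; apply: q1'; apply: q2.
Qed.

Lemma C5_add phi psi : C0 Omega phi -> C0 Omega psi ->
  C5 Lam Omega phi -> C5 Lam Omega psi ->
  C5 Lam Omega (fun z x y => phi z x y + psi z x y).
Proof.
move=> h01 h02 [c1 [c11 H1]] [c2 [c21 H2]]; exists (c1 + c2); split; first lra.
apply: filterS2 H1 H2 => p K1 K2 Dp.
apply: dlog_boundedD (C0_slice h01 Dp) (C0_slice h02 Dp) (K1 Dp) (K2 Dp); lra.
Qed.

Lemma C5_scale phi b : (forall x y, Omega x -> Omega y -> 0 < b x y) ->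
  C5 Lam Omega phi -> C5 Lam Omega (fun z x y => phi z x y * b x y).
Proof.
move=> hb [c1 [c11 H1]]; exists c1; split => //.
apply: filterS H1 => p K1 [x1 x2].
exact: (dlog_boundedMr (f := slice phi p)) (hb _ _ x1 x2) (K1 (conj x1 x2)).
Qed.

Lemma C5_mul phi psi : C4 Lam Omega phi -> C4 Lam Omega psi ->
  C5 Lam Omega phi -> C5 Lam Omega psi ->
  C5 Lam Omega (fun z x y => phi z x y * psi z x y).
Proof.
move=> h41 h42 h51 h52; have G1 := C4_C5_growth_fun h41 h51.
have G2 := C4_C5_growth_fun h42 h52.
case: h51 => [c1 [c11 H1]]; case: h52 => [c2 [c21 H2]].
exists (c1 + c2); split; first lra.
apply: filterS2 (filterI G1 G2) (filterI H1 H2) => p [K1 K2] [L1 L2] Dp.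
have [_ p1 _] := K1 Dp; have [_ p2 _] := K2 Dp.
exact: (dlog_boundedM (f := slice phi p) (g := slice psi p)) p1 p2 (L1 Dp) (L2 Dp).
Qed.

Lemma C5_comp phi psi : C4 Lam Omega psi ->
  C5 Lam Omega phi -> C5 Lam Omega psi ->
  C5 Lam Omega (fun z x y => phi (psi z x y) x y).
Proof.
move=> h42 h51 h52; have G2 := C4_C5_growth_fun h42 h52.
case: h51 => [c1 [c11 H1]]; case: h52 => [c2 [c21 H2]].
exists (c1 * c2); split; first nra.
apply: filterS2 G2 (filterI H1 H2) => p K2 [L1 L2] Dp.
have [_ p2 _] := K2 Dp.
exact: (dlog_bounded_comp (f := slice phi p) (g := slice psi p)) p2 (L1 Dp) (L2 Dp).
Qed.

Lemma conditions_C1_C5_add phi psi :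
  conditions_C1_C5 lam Lam Omega phi -> conditions_C1_C5 lam Lam Omega psi ->
  conditions_C1_C5 lam Lam Omega (fun z x y => phi z x y + psi z x y).
Proof.
move=> [h0 h1 h2 h3 [h4 h5]] [k0 k1 k2 k3 [k4 k5]].
split; [exact: C0_add | exact: C1_add | exact: C2_add | exact: C3_add |].
by split; [exact: C4_add | exact: C5_add].
Qed.

Lemma conditions_C1_C5_scale phi b (c5 c6 : R) :
  ae_measurable Lam D (fun p => b p.1 p.2) -> 0 < c5 ->
  (forall x y, Omega x -> Omega y -> c5 < b x y < c6) ->
  conditions_C1_C5 lam Lam Omega phi ->
  conditions_C1_C5 lam Lam Omega (fun z x y => phi z x y * b x y).
Proof.
move=> mb c50 hb [h0 h1 h2 h3 [h4 h5]].
have b0 x y : Omega x -> Omega y -> 0 < b x y.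
  by move=> ox oy; have /andP[/(lt_trans c50)] := hb x y ox oy.
split; [exact: C0_scale | exact: C1_scale | exact: C2_scale | exact: C3_scale |].
by split; [exact: C4_scale hb h4 | exact: C5_scale].
Qed.

Lemma conditions_C1_C5_mul phi psi :
  conditions_C1_C5 lam Lam Omega phi -> conditions_C1_C5 lam Lam Omega psi ->
  conditions_C1_C5 lam Lam Omega (fun z x y => phi z x y * psi z x y).
Proof.
move=> [h0 h1 h2 h3 [h4 h5]] [k0 k1 k2 k3 [k4 k5]].
split; [exact: C0_mul | exact: C1_mul | exact: C2_mul | exact: C3_mul |].
by split; [exact: C4_mul | exact: C5_mul].
Qed.

Lemma conditions_C1_C5_comp phi psi : is_lebesgue lam ->
  conditions_C1_C5 lam Lam Omega phi -> conditions_C1_C5 lam Lam Omega psi ->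
  conditions_C1_C5 lam Lam Omega (fun z x y => phi (psi z x y) x y).
Proof.
move=> leb [h0 h1 h2 h3 [h4 h5]] [k0 k1 k2 k3 [k4 k5]].
split; [exact: C0_comp | exact: C1_comp | exact: C2_comp | exact: C3_comp |].
by split; [exact: C4_comp | exact: C5_comp].
Qed.

End closure.

Theorem theorem2p9 (R : realType) (d : nat) (Omega : set 'rV[R]_d)
  (lam : {measure set 'rV[R]_d -> \bar R})
  (Lam : {measure set ('rV[R]_d * 'rV[R]_d) -> \bar R})
  (phi psi : R -> 'rV[R]_d -> 'rV[R]_d -> R) :
  is_domain Omega -> is_lebesgue lam -> is_lebesgue2 Lam ->
  conditions_C1_C5 lam Lam Omega phi ->
  conditions_C1_C5 lam Lam Omega psi ->
  [/\ (* (i) *)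
      conditions_C1_C5 lam Lam Omega (fun z x y => phi z x y + psi z x y),
      (* (ii) *)
      (forall (b : 'rV[R]_d -> 'rV[R]_d -> R) (c5 c6 : R),
         ae_measurable Lam (Omega `*` Omega) (fun p => b p.1 p.2) ->
         0 < c5 ->
         (forall x y, Omega x -> Omega y -> c5 < b x y < c6) ->
         conditions_C1_C5 lam Lam Omega (fun z x y => phi z x y * b x y)),
      (* (iii) *)
      conditions_C1_C5 lam Lam Omega (fun z x y => phi z x y * psi z x y) &
      (* (iv) *)
      conditions_C1_C5 lam Lam Omega (fun z x y => phi (psi z x y) x y)].
Proof.
move=> _ leb _ hphi hpsi; split.
- exact: conditions_C1_C5_add.
- by move=> b c5 c6 mb c50 hb; exact: conditions_C1_C5_scale mb c50 hb hphi.
- exact: conditions_C1_C5_mul.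
- exact: conditions_C1_C5_comp.
Qed.
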